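(* Let $X$ have the standard Cauchy distribution. Then the distribution function $F(x)=\frac{2}{\pi}\arctan(x)$, $x\ge0$, of $|X|$ satisfies $F\in\mathcal{S}_C$ but $F\notin\mathcal{S}_F$.
   Context: For a distribution function $G$, $G^{-1}(u)=\inf\{x\in\mathbb{R}:G(x)\ge u\}$ for $0<u<1$. For distribution functions $F,G$, write $F\le_{skew}G$ if the function $x\mapsto G^{-1}(F(x))$ is convex (on the set of $x$ with $0<F(x)<1$). For a distribution function $F$, $\mathcal{S}(F)=\{G: F\le_{skew}G\}$. Set $\mathcal{S}_F=\mathcal{S}(F_F)$ with $F_F(x)=e^{-1/x}$, $x>0$ (standard Fréchet), and $\mathcal{S}_C=\mathcal{S}(F_C)$ with $F_C(x)=\frac1\pi\arctan(x)+\frac12$, $x\in\mathbb{R}$ (Cauchy). *)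

From HB Require Import structures.
From mathcomp Require Import all_boot all_order all_algebra.
From mathcomp Require Import all_classical all_reals all_analysis.
Set Implicit Arguments. Unset Strict Implicit. Unset Printing Implicit Defensive.
Import Order.TTheory GRing.Theory Num.Theory numFieldNormedType.Exports.
Local Open Scope classical_set_scope.
Local Open Scope ring_scope.

Section Defs.
Variable R : realType.

Definition distribution_function (G : R -> R) : Prop :=
  [/\ {homo G : x y / x <= y},
      (forall x : R, G @ x^'+ --> G x),
      G x @[x --> -oo] --> (0 : R) &
      G x @[x --> +oo] --> (1 : R)].

Definition ginv (G : R -> R) (u : R) : R := inf [set x | u <= G x].

Definition skew_le (F G : R -> R) : Prop :=
  forall x y t : R,
    0 < F x < 1 -> 0 < F y < 1 -> 0 <= t <= 1 ->
    0 < F (t * x + (1 - t) * y) < 1 ->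
    ginv G (F (t * x + (1 - t) * y))
      <= t * ginv G (F x) + (1 - t) * ginv G (F y).

Definition skew_class (F : R -> R) : set (R -> R) :=
  [set G | distribution_function G /\ skew_le F G].

Definition F_Frechet (x : R) : R := if 0 < x then expR (- x^-1) else 0.

Definition F_Cauchy (x : R) : R := pi^-1 * atan x + 2^-1.

Definition S_F : set (R -> R) := skew_class F_Frechet.
Definition S_C : set (R -> R) := skew_class F_Cauchy.

Definition F_absCauchy (x : R) : R := if 0 <= x then 2 / pi * atan x else 0.

End Defs.

From HB Require Import structures.
From mathcomp Require Import all_boot all_order all_algebra.
From mathcomp Require Import all_classical all_reals all_analysis.
From mathcomp Require Import ring lra.
Set Implicit Arguments. Unset Strict Implicit. Unset Printing Implicit Defensive.
Import Order.TTheory GRing.Theory Num.Theory numFieldNormedType.Exports.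
Local Open Scope classical_set_scope.
Local Open Scope ring_scope.

(* On [0, +oo) the distribution function of |X| is 2/pi * atan, so its
   quantile function is u |-> tan (u pi / 2).  Composed with the Cauchy
   distribution function this gives z |-> tan (pi/4 + atan z / 2) = z + sqrt (1 + z^2),
   which is convex.  Composed with the Frechet distribution function it gives
   x |-> tan (pi/2 exp (-1/x)); its values tan (pi/6), tan (pi/4) = 1 and
   tan (pi/3) at the points 1/ln 3 < 1/ln 2 < 1/ln (3/2) violate convexity. *)

Section SkewAbsCauchy.
Variable R : realType.
Implicit Types (a b t u x y z : R).

Lemma ginv_eq_min (G : R -> R) u x0 :
  u <= G x0 -> (forall x, u <= G x -> x0 <= x) -> ginv G u = x0.
Proof.
move=> Gx0 x0_lb; apply/eqP; rewrite eq_le; apply/andP; split.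
  by apply: ge_inf => //; exists x0 => y /x0_lb.
by apply: lb_le_inf => [|y /x0_lb]; first exists x0.
Qed.

Lemma mul_pihalf_itv u : 0 < u < 1 -> 0 < u * (pi / 2) < pi / 2.
Proof. by move=> /andP[u0 u1]; rewrite mulr_gt0 ?gtr_pMl ?divr_gt0 ?pi_gt0. Qed.

Lemma pihalf_itvN a : 0 < a < pi / 2 -> - (pi / 2) < a < pi / 2.
Proof.
by move=> /andP[a0 ->]; rewrite andbT (lt_trans _ a0) // oppr_lt0 divr_gt0 ?pi_gt0.
Qed.

Lemma tan_gt0_pihalf a : 0 < a < pi / 2 -> 0 < tan a.
Proof.
move=> a_itv; rewrite divr_gt0 ?sin_gt0_pihalf //.
exact/cos_gt0_pihalf/pihalf_itvN.
Qed.

Lemma tan_pihalfB a : tan (pi / 2 - a) = (tan a)^-1.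
Proof. by rewrite /tan -opprB sinN cosN sinBpihalf cosBpihalf opprK invf_div. Qed.

Lemma tan_half_angle a : cos a != 0 -> tan a = sin (a *+ 2) / (1 + cos (a *+ 2)).
Proof.
move=> cos_a; rewrite sin_mulr2n cos_mulr2n addrC subrK /tan.
rewrite -(mulr_natr (cos a * sin a)) -(mulr_natr (cos a ^+ 2)).
rewrite invfM mulrACA divff ?pnatr_eq0 // mulr1.
by rewrite expr2 invfM mulrACA divff // mul1r.
Qed.

Lemma sin_atan z : sin (atan z) = z / Num.sqrt (1 + z ^+ 2).
Proof.
rewrite -{1}[z in RHS](atanK z) /tan cos_atan divfK // invr_neq0 // gt_eqF //.
by rewrite sqrtr_gt0 ltr_pwDl ?sqr_ge0.
Qed.

(* tan (pi/3) = 2 tan (pi/6) / (1 - tan (pi/6)^2) is also 1 / tan (pi/6). *)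
Lemma tan_pisixth_sqr : tan (3^-1 * (pi / 2)) ^+ 2 = 3^-1 :> R.
Proof.
have b_itv := @mul_pihalf_itv 3^-1 ltac:(lra).
set b := 3^-1 * (pi / 2) in b_itv *; set p := tan b.
have p0 : 0 < p := tan_gt0_pihalf b_itv.
have : p^-1 = p *+ 2 / (1 - p ^+ 2).
  rewrite -tan_pihalfB -tan_mulr2n ?gt_eqF ?cos_gt0_pihalf ?pihalf_itvN //.
  by congr tan; rewrite /b mulr2n; move: pi => q; field.
have [-> | p2_ne1] := eqVneq (1 - p ^+ 2) 0.
  by rewrite invr0 mulr0 => /eqP; rewrite invr_eq0 gt_eqF.
move=> /(congr1 (fun w => w * p * (1 - p ^+ 2))).
rewrite mulVf ?gt_eqF // mul1r mulrAC divfK // mulrnAl -expr2 => h; lra.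
Qed.

Lemma tan_pisixth_mix_lt1 t : 16 / 25 < t ->
  t * tan (3^-1 * (pi / 2)) + (1 - t) / tan (3^-1 * (pi / 2)) < 1 :> R.
Proof.
have p0 := tan_gt0_pihalf (@mul_pihalf_itv 3^-1 ltac:(lra)).
have := tan_pisixth_sqr; move: (tan _) p0 => p p0 p2 t_gt.
rewrite -(ltr_pM2r p0) mul1r.
have -> : (t * p + (1 - t) / p) * p = t * p ^+ 2 + (1 - t) by field; rewrite gt_eqF.
rewrite p2 ltNge; apply/negP => p_le.
have : p ^+ 2 < 43 / 75 * (43 / 75) by rewrite expr2 ltr_pM ?(ltW p0) //; lra.
lra.
Qed.

Local Notation F := (@F_absCauchy R).

Lemma F_absCauchyE x : 0 <= x -> F x = 2 / pi * atan x.
Proof. by rewrite /F_absCauchy => ->. Qed.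

Lemma F_absCauchy_ge0 x : 0 <= F x.
Proof.
rewrite /F_absCauchy; case: ifP => // x0.
by rewrite mulr_ge0 ?divr_ge0 ?(ltW (@pi_gt0 R)) // -atan0 le_atan.
Qed.

Lemma F_absCauchy_lt x y : 0 < y -> x < y -> F x < F y.
Proof.
move=> y0 xy; have k0 : 0 < 2 / pi :> R by rewrite divr_gt0 ?pi_gt0.
rewrite (F_absCauchyE (ltW y0)) /F_absCauchy; case: ifP => _.
  by rewrite ltr_pM2l // lt_atan.
by rewrite mulr_gt0 // -atan0 lt_atan.
Qed.

Lemma F_absCauchy_tan a : 0 < a < pi / 2 -> F (tan a) = a / (pi / 2).
Proof.
move=> a_itv; rewrite F_absCauchyE ?ltW ?tan_gt0_pihalf //.
rewrite tanK; last by rewrite in_itv /= pihalf_itvN.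
by rewrite mulrC invf_div mulrA.
Qed.

Lemma ginv_F_absCauchy u : 0 < u < 1 -> ginv F u = tan (u * (pi / 2)).
Proof.
move=> u01; have a_itv := mul_pihalf_itv u01.
have Fa : F (tan (u * (pi / 2))) = u.
  by rewrite F_absCauchy_tan // mulfK // gt_eqF ?divr_gt0 ?pi_gt0.
apply: ginv_eq_min => [|x u_le]; first by rewrite Fa.
rewrite leNgt; apply/negP => /(F_absCauchy_lt (tan_gt0_pihalf a_itv)).
by rewrite Fa ltNge u_le.
Qed.

Lemma ginv_F_absCauchy_1B u : 0 < u < 1 -> ginv F (1 - u) = (ginv F u)^-1.
Proof.
move=> u01; rewrite !ginv_F_absCauchy -?tan_pihalfB ?mulrBl ?mul1r //; lra.
Qed.
Lemma distribution_function_F_absCauchy : distribution_function F.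
Proof.
have k0 : 0 < 2 / pi :> R by rewrite divr_gt0 ?pi_gt0.
have F_atan : {near +oo, (fun y => 2 / pi * atan y) =1 F}.
  by near=> y; rewrite F_absCauchyE.
split.
- move=> x y xy; case: (leP 0 x) => x0.
    by rewrite !F_absCauchyE ?(le_trans x0 xy) // ler_pM2l // le_atan.
  rewrite {1}/F_absCauchy ifF ?F_absCauchy_ge0 //.
  by apply/negbTE; rewrite -ltNge.
- move=> x; case: (leP 0 x) => x0.
    have F_atan_right : {near x^'+, (fun y => 2 / pi * atan y) =1 F}.
      near=> y; rewrite F_absCauchyE //; apply: le_trans x0 (ltW _).
      near: y; exact: nbhs_right_gt.
    apply: cvg_trans (near_eq_cvg F_atan_right) _.
    rewrite F_absCauchyE //; apply: cvg_at_right_filter.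
    exact: (cvgMl_tmp (a := 2 / pi) (@continuous_atan R x)).
  apply: cvg_near_cst; near=> y.
  rewrite /F_absCauchy !ifF //; first by apply/negbTE; rewrite -ltNge.
  apply/negbTE; rewrite -ltNge; near: y; exact: nbhs_right_lt.
- apply: cvg_near_cst; near=> y; rewrite /F_absCauchy ifF //; apply/negbTE; rewrite -ltNge.
  by near: y; exact: nbhs_ninfty_lt.
- apply: cvg_trans (near_eq_cvg F_atan) _.
  have k_pihalf : 2 / pi * (pi / 2) = 1 :> R.
    by move: pi (@pi_gt0 R) => p p0; field; rewrite gt_eqF.
  by have := cvgMl_tmp (a := 2 / pi) (@cvgy_atan R); rewrite k_pihalf; exact.
Unshelve. all: by end_near.
Qed.

Lemma F_Cauchy_in01 z : 0 < F_Cauchy z < 1.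
Proof.
have pi0 := @pi_gt0 R; rewrite /F_Cauchy.
have := atan_gtNpi2 z; have := atan_ltpi2 z; move: (atan z) => t.
move: pi pi0 => p p0 tp ptp; apply/andP; split.
- rewrite -ltrBlDr sub0r -ltr_pdivrMl ?invr_gt0 // invrK; lra.
- rewrite -ltrBrDr -ltr_pdivlMl ?invr_gt0 // invrK; lra.
Qed.

(* tan (pi/4 + atan z / 2) = cos (atan z) / (1 - sin (atan z)) = 1 / (s - z),
   and (s - z) (s + z) = 1 for s = sqrt (1 + z^2). *)
Lemma ginv_F_absCauchy_Cauchy z :
  ginv F (F_Cauchy z) = z + Num.sqrt (1 + z ^+ 2).
Proof.
have pi0 := @pi_gt0 R.
have a_itv := mul_pihalf_itv (F_Cauchy_in01 z).
rewrite ginv_F_absCauchy ?F_Cauchy_in01 //.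
set a := F_Cauchy z * (pi / 2) in a_itv *; set s := Num.sqrt (1 + z ^+ 2).
have two_a : a *+ 2 = atan z + pi / 2.
  by rewrite /a /F_Cauchy -mulr_natr; move: pi pi0 => p p0; field; rewrite gt_eqF.
have cos_a : cos a != 0 by rewrite gt_eqF ?cos_gt0_pihalf ?pihalf_itvN.
have s0 : 0 < s by rewrite sqrtr_gt0 ltr_pwDl ?sqr_ge0.
have s2 : s ^+ 2 = 1 + z ^+ 2 by rewrite sqr_sqrtr // addr_ge0 ?sqr_ge0.
have zs : z < s.
  apply: le_lt_trans (ler_norm z) _.
  rewrite -(ltr_pXn2r (n := 2)) ?nnegrE ?normr_ge0 ?(ltW s0) //.
  by rewrite real_normK ?num_real // s2 ltrDr.
rewrite tan_half_angle // two_a sinDpihalf cosDpihalf cos_atan sin_atan -/s.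
apply: (@mulIf _ (s - z)); first by rewrite subr_eq0 gt_eqF.
have -> : (z + s) * (s - z) = 1.
  have -> : (z + s) * (s - z) = s ^+ 2 - z ^+ 2 by ring.
  by rewrite s2 addrK.
by field; rewrite subr_eq0 gt_eqF //= gt_eqF.
Qed.

Lemma sqrt1Dsqr_mul_ge x y :
  1 + x * y <= Num.sqrt (1 + x ^+ 2) * Num.sqrt (1 + y ^+ 2).
Proof.
rewrite -sqrtrM ?addr_ge0 ?sqr_ge0 //.
apply: le_trans (ler_norm _) _; rewrite -sqrtr_sqr ler_sqrt ?mulr_ge0 ?addr_ge0 ?sqr_ge0 //.
by have := sqr_ge0 (x - y); rewrite !expr2 => ?; nra.
Qed.

Lemma convex_sqrt1Dsqr x y t : 0 <= t <= 1 ->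
  Num.sqrt (1 + (t * x + (1 - t) * y) ^+ 2)
    <= t * Num.sqrt (1 + x ^+ 2) + (1 - t) * Num.sqrt (1 + y ^+ 2).
Proof.
move=> /andP[t0 t1]; set A := Num.sqrt (1 + x ^+ 2); set B := Num.sqrt (1 + y ^+ 2).
have W0 : 0 <= t * A + (1 - t) * B by rewrite addr_ge0 // mulr_ge0 ?sqrtr_ge0 ?subr_ge0.
rewrite -(ger0_norm W0) -sqrtr_sqr ler_sqrt ?sqr_ge0 //.
have AB := sqrt1Dsqr_mul_ge x y; rewrite -/A -/B in AB.
have [A2 B2] : A ^+ 2 = 1 + x ^+ 2 /\ B ^+ 2 = 1 + y ^+ 2.
  by rewrite !sqr_sqrtr ?addr_ge0 ?sqr_ge0.
have tt : 0 <= 2 * t * (1 - t) by rewrite !mulr_ge0 ?subr_ge0.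
have := ler_wpM2l tt AB.
have -> : (t * A + (1 - t) * B) ^+ 2
  = t ^+ 2 * A ^+ 2 + (1 - t) ^+ 2 * B ^+ 2 + 2 * t * (1 - t) * (A * B) by ring.
rewrite A2 B2 => ?; lra.
Qed.

Lemma skew_le_Cauchy_absCauchy : skew_le (@F_Cauchy R) F.
Proof.
move=> x y t _ _ t01 _; rewrite !ginv_F_absCauchy_Cauchy.
have -> : t * (x + Num.sqrt (1 + x ^+ 2)) + (1 - t) * (y + Num.sqrt (1 + y ^+ 2))
  = (t * x + (1 - t) * y)
    + (t * Num.sqrt (1 + x ^+ 2) + (1 - t) * Num.sqrt (1 + y ^+ 2)) by ring.
by rewrite lerD2l convex_sqrt1Dsqr.
Qed.

Lemma F_Frechet_lnV (k : R) : 1 < k -> F_Frechet (ln k)^-1 = k^-1.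
Proof.
move=> k1; have k0 : 0 < k := lt_trans ltr01 k1.
by rewrite /F_Frechet invr_gt0 ln_gt0 // invrK expRN lnK.
Qed.

Lemma ln3_ln2_bound : 5 * ln 3 < 8 * ln 2 :> R.
Proof.
rewrite !mulr_natl -!lnXn ?ltr0n // ltr_ln ?posrE ?exprn_gt0 ?ltr0n //.
by rewrite -!natrX ltr_nat.
Qed.

Definition harmonic_weight a b := a * (2 * b - a) / b ^+ 2.

Lemma harmonic_weightE a b : 0 < b < a ->
  harmonic_weight a b / a + (1 - harmonic_weight a b) / (a - b) = b^-1.
Proof.
by move=> /andP[b0 ba]; rewrite /harmonic_weight; field; rewrite !gt_eqF ?subr_gt0 //; lra.
Qed.

Lemma harmonic_weight_le1 a b : 0 < b -> harmonic_weight a b <= 1.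
Proof.
move=> b0; rewrite /harmonic_weight ler_pdivrMr ?exprn_gt0 //.
by have := sqr_ge0 (a - b); rewrite !expr2 => ?; lra.
Qed.

Lemma harmonic_weight_gt a b : 0 < b -> 2 * b < 5 * a -> 5 * a < 8 * b ->
  16 / 25 < harmonic_weight a b.
Proof.
move=> b0 lb ub; rewrite /harmonic_weight ltr_pdivlMr ?exprn_gt0 //.
have : 0 < (5 * a - 2 * b) * (8 * b - 5 * a) by rewrite mulr_gt0 ?subr_gt0.
by rewrite expr2 => ?; lra.
Qed.

Lemma not_skew_le_Frechet_absCauchy : ~ skew_le (@F_Frechet R) F.
Proof.
move=> skew.
have F3 : F_Frechet (ln 3)^-1 = 3^-1 :> R by rewrite F_Frechet_lnV ?ltr1n.
have F2 : F_Frechet (ln 2)^-1 = 2^-1 :> R by rewrite F_Frechet_lnV ?ltr1n.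
have F32 : F_Frechet (ln 3 - ln 2)^-1 = 1 - 3^-1 :> R.
  have k1 : 1 < 3 / 2 :> R by lra.
  by rewrite -ln_div ?posrE ?ltr0n // F_Frechet_lnV // invf_div; lra.
have b0 : 0 < ln 2 :> R by rewrite ln_gt0 ?ltr1n.
have ba : ln 2 < ln 3 :> R by rewrite ltr_ln ?posrE ?ltr0n // ltr_nat.
have lb : 2 * ln 2 < 5 * ln 3 :> R by lra.
have t_gt := harmonic_weight_gt b0 lb ln3_ln2_bound.
have t_le := harmonic_weight_le1 (ln 3) b0.
have := skew (ln 3)^-1 (ln 3 - ln 2)^-1 (harmonic_weight (ln 3) (ln 2)).
rewrite harmonic_weightE ?b0 // F3 F2 F32 ginv_F_absCauchy_1B ?ginv_F_absCauchy; try lra.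
move/(_ ltac:(lra) ltac:(lra) ltac:(lra) ltac:(lra)).
have -> : tan (2^-1 * (pi / 2)) = 1 :> R.
  by rewrite -[in RHS]tan_piquarter; congr tan; move: pi => q; field.
by rewrite leNgt tan_pisixth_mix_lt1.
Qed.

End SkewAbsCauchy.

Theorem mainTheorem8 (R : realType) :
  S_C (@F_absCauchy R) /\ ~ S_F (@F_absCauchy R).
Proof.
split.
- by split; [exact: distribution_function_F_absCauchy | exact: skew_le_Cauchy_absCauchy].
- by case=> _; exact: not_skew_le_Frechet_absCauchy.
Qed.
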